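(* Let $$Q_1(x) = x^{q^2+1} + 1 + x^t\, R(x) + x^t \sum_{j=0}^{\log_2\sqrt{q/2}\,-1} x^{2^j(\sqrt{2q}-2)t}\,\bigl(1 + x^{\sqrt{2q}\,t}\bigr)^{2^j-1},$$ where $$R(x) = \frac{1 + x^{\sqrt{2q}\,t(\sqrt{q/2}-1)}}{1 + x^{\sqrt{2q}\,t}} = \sum_{i=0}^{\sqrt{q/2}-2} x^{i\sqrt{2q}\,t}$$ (a polynomial over $\mathbb{F}_2$). Then the set of solutions of $Q_1(x) = 0$ is exactly $\mathcal{T}_1$.
   Context: Let $q = 2^m$ with $m \ge 3$ odd, so that $\sqrt{2q} = 2^{(m+1)/2}$ and $\sqrt{q/2} = 2^{(m-1)/2}$ are integers. Let $E = \mathbb{F}_{q^4}$, and put $s = q - \sqrt{2q} + 1$ and $t = q + \sqrt{2q} + 1$. Let $\mathcal{O}_s = \{x \in E \mid x^s = 1\}$ and $\mathcal{O}_t = \{x \in E \mid x^t = 1\}$. Define $$\mathcal{T}_1 = \mathcal{O}_t \cup \left\{\left(u^{q-1} + u^{-(q-1)}\right)^{q-1} uv \;\middle|\; u \in \mathcal{O}_s \setminus \{1\},\ v \in \mathcal{O}_t\right\}.$$ *)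

From HB Require Import structures.
From mathcomp Require Import all_boot all_order all_algebra all_field.
Set Implicit Arguments. Unset Strict Implicit. Unset Printing Implicit Defensive.
Import GRing.Theory.
Local Open Scope ring_scope.

(* Parameters, for q = 2^m with m odd, m >= 3. *)
Definition qq (m : nat) : nat := 2 ^ m.
(* sqrt(2q) = 2^((m+1)/2) *)
Definition sq2q (m : nat) : nat := 2 ^ (m.+1 %/ 2).
(* sqrt(q/2) = 2^((m-1)/2);  log_2 sqrt(q/2) = (m-1)/2 *)
Definition sqq2 (m : nat) : nat := 2 ^ (m.-1 %/ 2).
Definition log_sqq2 (m : nat) : nat := m.-1 %/ 2.
Definition ss (m : nat) : nat := (qq m + 1 - sq2q m)%N.
Definition tt (m : nat) : nat := (qq m + sq2q m + 1)%N.

Definition Rpoly (m : nat) (F : fieldType) (x : F) : F :=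
  \sum_(i < (sqq2 m).-1) x ^+ (i * sq2q m * tt m).

Definition Q1 (m : nat) (F : fieldType) (x : F) : F :=
  x ^+ (qq m ^ 2 + 1) + 1 + x ^+ tt m * Rpoly m x
  + x ^+ tt m * \sum_(j < log_sqq2 m)
        x ^+ (2 ^ j * (sq2q m - 2) * tt m) * (1 + x ^+ (sq2q m * tt m)) ^+ (2 ^ j - 1).

Definition T1 (m : nat) (F : fieldType) (x : F) : Prop :=
  x ^+ tt m = 1 \/
  exists u v : F,
    [/\ u ^+ ss m = 1, u != 1, v ^+ tt m = 1 &
        x = (u ^+ (qq m - 1) + (u ^+ (qq m - 1))^-1) ^+ (qq m - 1) * u * v].

From HB Require Import structures.
From mathcomp Require Import all_boot all_order all_algebra all_field.
From mathcomp Require Import cyclic ring zify.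
Set Implicit Arguments. Unset Strict Implicit. Unset Printing Implicit Defensive.
Import GRing.Theory.
Local Open Scope ring_scope.

(* Write q = 2 a^2, r = sqrt(2q) = 2 a, s = q + 1 - r and t = q + 1 + r, so that q^2 + 1 = s t and
   Q_1(x) = G(x^t) for a polynomial G ([Gpoly]) of degree s with coefficients fixed by Frobenius;
   hence the roots of G are closed under squaring.  Besides 1, G has the following roots.  For u in
   O_s \ {1} put U = u^(q-1) and w = (u^2 U + 1)/(U + 1) ([Groot]).  From u^s = 1 and r^2 = 2q,
   u^r = u^2 U, u^q = u U, U^r = u^-2 and U^q = (u^2 U)^-1, which turn every power of w occurring
   in G(w) into a rational function of u and U; after summing the geometric and the telescoping part
   of G, the equation G(w) = 0 becomes a rational identity in characteristic 2.  The element of T_1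
   built from u ([T1_param]) is w^2/u, and its t-th power (w^r)^2 is again a root of G; as
   w^(q+1) = u^r, distinct u give distinct roots.  These s roots exhaust the roots of G, so
   Q_1(x) = 0 iff x^t is 1 or the t-th power of such an element, i.e. iff x lies in T_1. *)

Section FieldChar2.
Variable F : fieldType.
Hypothesis F_char2 : 2 \in [pchar F].

Lemma pnat_pchar2_exp2 e : [pchar F].-nat (2 ^ e)%N.
Proof. by rewrite (eq_pnat _ (pcharf_eq F_char2)) pnatX pnat_id. Qed.

Lemma exprD_pchar2 e (x y : F) : (x + y) ^+ (2 ^ e)%N = x ^+ (2 ^ e)%N + y ^+ (2 ^ e)%N.
Proof. exact/exprDn_pchar/pnat_pchar2_exp2. Qed.

Lemma expr2n_inj_pchar2 e : injective (fun x : F => x ^+ (2 ^ e)%N).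
Proof.
move=> x y /= exy; apply/eqP; rewrite -subr_eq0.
have: (x - y) ^+ (2 ^ e)%N == 0.
  by rewrite exprDn_pchar ?exprNn_pchar ?pnat_pchar2_exp2 // exy subrr.
by rewrite expf_eq0 => /andP[].
Qed.

Lemma expr2n_eq1_pchar2 e (x : F) : x ^+ (2 ^ e)%N = 1 -> x = 1.
Proof. by move=> x1; apply: (@expr2n_inj_pchar2 e); rewrite /= x1 expr1n. Qed.

Lemma sqrD_pchar2 (x y : F) : (x + y) ^+ 2 = x ^+ 2 + y ^+ 2.
Proof. exact: (exprD_pchar2 1). Qed.

Lemma addr1_eq0_pchar2 (x : F) : (x + 1 == 0) = (x == 1).
Proof. by rewrite -[x == 1]subr_eq0 (oppr_pchar2 F_char2). Qed.

Lemma eq_addrr_pchar2 (c x y : F) : x = y + (c + c) -> x = y.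
Proof. by rewrite addrr_pchar2 // addr0. Qed.

Lemma geometric_sum_pchar2 (y : F) n : (1 + y) * \sum_(i < n) y ^+ i = 1 + y ^+ n.
Proof.
by have := subrX1 y n; rewrite !(oppr_pchar2 F_char2) addrC [1 + y]addrC => <-.
Qed.

Lemma telescope_exp2_pchar2 (y : F) k :
  \sum_(j < k) (y + y ^+ 2) ^+ (2 ^ j)%N = y + y ^+ (2 ^ k)%N.
Proof.
elim: k => [|k IHk]; first by rewrite big_ord0 expr1 addrr_pchar2.
by rewrite big_ord_recr /= IHk exprD_pchar2 -exprM -expnS addrA addrK_pchar2.
Qed.

Lemma horner_exp2n_pchar2 (p : {poly F}) e x :
  map_poly (pFrobenius_aut F_char2) p = p -> p.[x ^+ (2 ^ e)%N] = p.[x] ^+ (2 ^ e)%N.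
Proof.
move=> p_fixed; elim: e => [|e IHe]; first by rewrite !expr1.
by rewrite expnSr !exprM -IHe -{1}p_fixed (horner_map (pFrobenius_aut F_char2)).
Qed.

End FieldChar2.

Lemma size_Xmul_leq (F : nzRingType) (p : {poly F}) n :
  (size p <= n)%N -> (size ('X * p)%R <= n.+1)%N.
Proof. by move=> le_p_n; apply: leq_trans (size_polyMleq _ _) _; rewrite size_polyX. Qed.

Lemma size_sum_leq (F : nzRingType) n (P : pred 'I_n) (G : 'I_n -> {poly F}) d :
  (forall i, P i -> size (G i) <= d)%N -> (size (\sum_(i < n | P i) G i)%R <= d)%N.
Proof. by move=> le_G_d; apply: leq_trans (size_sum _ _ _) _; apply/bigmax_leqP. Qed.

Lemma mem_roots_of_size (F : fieldType) (p : {poly F}) (rs : seq F) :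
  p != 0 -> all (root p) rs -> uniq rs -> (size p <= (size rs).+1)%N ->
  forall x, root p x -> x \in rs.
Proof.
move=> p_neq0 rs_roots rs_uniq size_p x px; apply: contraT => x_notin.
have := max_poly_roots p_neq0 (rs := x :: rs).
by rewrite /= px rs_roots x_notin rs_uniq ltnNge size_p => /(_ isT isT).
Qed.

Lemma prim_root_dvd_card (E : finFieldType) n :
  (n %| #|E|.-1)%N -> exists g : E, n.-primitive_root g.
Proof.
move=> n_dvd; have E_gt1 := finNzRing_gt1 E.
have /hasP[h _ h_prim] : has (#|E|.-1).-primitive_root (enum [pred y : E | y != 0]).
  apply: has_prim_root; rewrite ?enum_uniq ?ltn_predRL // -?cardE ?cardC1 //.
  apply/allP => y; rewrite mem_enum inE => y_neq0; apply/unity_rootP.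
  by apply: (mulIf y_neq0); rewrite mul1r -exprSr prednK ?expf_card // ltnW.
by exists (h ^+ (#|E|.-1 %/ n)); apply: dvdn_prim_root.
Qed.

Definition Gpoly (F : nzRingType) (m : nat) : {poly F} :=
  'X^(ss m) + 1 + 'X * \sum_(i < (sqq2 m).-1) 'X^(i * sq2q m)
  + 'X * \sum_(j < log_sqq2 m)
           'X^(2 ^ j * (sq2q m - 2)) * (1 + 'X^(sq2q m)) ^+ (2 ^ j - 1).

Lemma horner_Gpoly (F : comNzRingType) m (z : F) :
  (Gpoly F m).[z] = z ^+ ss m + 1 + z * \sum_(i < (sqq2 m).-1) z ^+ (i * sq2q m)
    + z * \sum_(j < log_sqq2 m)
            z ^+ (2 ^ j * (sq2q m - 2)) * (1 + z ^+ sq2q m) ^+ (2 ^ j - 1).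
Proof.
rewrite !hornerE !horner_sum; congr (_ + _ + _ * _ + _ * _).
  by apply: eq_bigr => i _; rewrite hornerXn.
by apply: eq_bigr => j _; rewrite !hornerE.
Qed.

Lemma map_Gpoly (F : nzRingType) (f : {rmorphism F -> F}) m :
  map_poly f (Gpoly F m) = Gpoly F m.
Proof.
rewrite /Gpoly !(rmorphD, rmorphM, rmorph_sum, rmorphXn, rmorph1) /= map_polyX.
by congr (_ + _ + _ * _ + _ * _); apply: eq_bigr => i _;
  rewrite ?(rmorphM, rmorphXn, rmorphD, rmorph1) /= map_polyX.
Qed.

Definition T1_param (F : fieldType) m (u : F) : F :=
  (u ^+ (qq m - 1) + (u ^+ (qq m - 1))^-1) ^+ (qq m - 1) * u.

Definition Groot (F : fieldType) m (u : F) : F :=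
  (u ^+ 2 * u ^+ (qq m - 1) + 1) / (u ^+ (qq m - 1) + 1).

Section OddExponent.
Variable m : nat.
Hypotheses (m_odd : odd m) (m_ge3 : (3 <= m)%N).

Local Notation q := (qq m).
Local Notation r := (sq2q m).
Local Notation a := (sqq2 m).
Local Notation k := (log_sqq2 m).
Local Notation s := (ss m).
Local Notation t := (tt m).

Lemma odd_log_sqq2 : m = k.*2.+1.
Proof. by rewrite /log_sqq2; have := odd_double_half m; rewrite m_odd; lia. Qed.

Lemma sq2q_double : r = (2 * a)%N.
Proof. by rewrite /sq2q /sqq2 -expnS {1}odd_log_sqq2 /log_sqq2; congr (2 ^ _)%N; lia. Qed.

Lemma qq_sqq2 : q = (2 * a * a)%N.
Proof. by rewrite /qq {1}odd_log_sqq2 /sqq2 -/(log_sqq2 m) -mulnA -expnD addnn expnS. Qed.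

Lemma sqq2_ge2 : (2 <= a)%N.
Proof.
rewrite /sqq2 -/(log_sqq2 m) -{1}(expn1 2) leq_exp2l //.
by have := odd_log_sqq2; lia.
Qed.

Ltac param_arith := rewrite /ss /tt ?sq2q_double ?qq_sqq2; have := sqq2_ge2; nia.

Lemma ss_gt0 : (0 < s)%N. Proof. param_arith. Qed.
Lemma qq_addn1 : (q + 1 = s + r)%N. Proof. param_arith. Qed.
Lemma sq2q_sq : (r * r = 2 * q)%N. Proof. param_arith. Qed.
Lemma sq2q_sqq2 : (r * a = q)%N. Proof. param_arith. Qed.
Lemma tt_ss : (t * s = q ^ 2 + 1)%N. Proof. param_arith. Qed.
Lemma sq2q_ge2 : (2 <= r)%N. Proof. param_arith. Qed.
Lemma sq2q_le_qq : (r <= q)%N. Proof. param_arith. Qed.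
Lemma ss_subS : s = (q - r).+1. Proof. param_arith. Qed.
Lemma sq2q_mul_pred : (r * a.-1 = q - r)%N. Proof. param_arith. Qed.
Lemma qq_sub1S : (q - 1).+1 = q. Proof. param_arith. Qed.
Lemma qq_addn1_sub1 : (q + 1 = 2 + (q - 1))%N. Proof. param_arith. Qed.

Lemma ss_dvd : (s %| q ^ 4 - 1)%N.
Proof.
have -> : (q ^ 4 - 1 = (q ^ 2 - 1) * t * s)%N.
  by rewrite -mulnA tt_ss -subn_sqr -expnM exp1n.
exact: dvdn_mull.
Qed.

Lemma size_Gpoly (F : nzRingType) : size (Gpoly F m) = s.+1.
Proof.
have le_s1 : leq (size (1 : {poly F})) s by rewrite size_poly1 ss_gt0.
rewrite /Gpoly -!addrA size_polyDl size_polyXn // ltnS.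
apply: leq_trans (size_polyD _ _) _; rewrite geq_max le_s1.
apply: leq_trans (size_polyD _ _) _; rewrite geq_max.
have -> : s = s.-1.+1 by rewrite prednK ?ss_gt0.
apply/andP; split; apply/size_Xmul_leq/size_sum_leq => i _.
  by rewrite size_polyXn; have := ltn_ord i; param_arith.
apply: leq_trans (size_polyMleq _ _) _; rewrite size_polyXn addSn /=.
have le_pow : leq (size ((1 + 'X^r) ^+ (2 ^ i - 1)%N : {poly F})) (r * (2 ^ i - 1)).+1.
  apply: leq_trans (size_poly_exp_leq _ _) _; rewrite ltnS leq_mul2r; apply/orP; right.
  by rewrite addrC size_polyDl size_polyXn // size_poly1 ltnS; param_arith.
apply: leq_trans (leq_add (leqnn _) le_pow) _.
have lt_i_k := ltn_ord i; have : (2 * 2 ^ i <= a)%N.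
  by rewrite -expnS /sqq2 -/(log_sqq2 m) leq_exp2l.
have : (0 < 2 ^ i)%N by rewrite expn_gt0.
param_arith.
Qed.

Lemma Q1_Gpoly (F : fieldType) (x : F) : Q1 m x = (Gpoly F m).[x ^+ t].
Proof.
rewrite horner_Gpoly /Q1 /Rpoly -!exprM mulnC tt_ss.
by congr (_ + _ * _ + _ * _); apply: eq_bigr => i _; rewrite -exprM [in RHS]mulnC.
Qed.

Section Char2.
Variable F : fieldType.
Hypothesis F_char2 : 2 \in [pchar F].

Lemma horner_Gpoly_exp2n e (z : F) :
  (Gpoly F m).[z ^+ (2 ^ e)] = (Gpoly F m).[z] ^+ (2 ^ e).
Proof. exact/horner_exp2n_pchar2/map_Gpoly. Qed.

Lemma root_Gpoly1 : root (Gpoly F m) 1.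
Proof.
have k_gt0 : (0 < k)%N by have := odd_log_sqq2; lia.
rewrite /root horner_Gpoly !expr1n !mul1r (addrr_pchar2 F_char2) add0r.
under eq_bigr do rewrite expr1n.
under [X in _ + X]eq_bigr do rewrite expr1n mul1r.
rewrite sumr_const card_ord -(prednK k_gt0) big_ord_recl big1 => [|j _]; last first.
  by rewrite expr0n subn_eq0 leqNgt -[X in (X < _)%N](expn0 2) ltn_exp2l.
rewrite /= expr0 addr0 -mulrSr prednK ?expn_gt0 //.
by rewrite /sqq2 -/(log_sqq2 m) natrX (pcharf0 F_char2) expr0n eqn0Ngt k_gt0.
Qed.

Lemma root_Gpoly_exp2n e (z : F) : root (Gpoly F m) z -> root (Gpoly F m) (z ^+ (2 ^ e)).
Proof. by rewrite /root horner_Gpoly_exp2n => /eqP->; rewrite expr0n expn_eq0. Qed.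

Section RootOfG.
Variable u : F.
Hypotheses (u_s : u ^+ s = 1) (u_neq1 : u != 1).

Local Notation U := (u ^+ (q - 1)).
Local Notation w := (Groot m u).

Let u_neq0 : u != 0.
Proof. by apply: contra_eq_neq u_s => ->; rewrite expr0n eqn0Ngt ss_gt0 /= eq_sym oner_neq0. Qed.

Let U_neq0 : U != 0. Proof. exact: expf_neq0. Qed.

Lemma u_exp_r : u ^+ r = u ^+ 2 * U.
Proof. by rewrite -exprD -[LHS]mul1r -u_s -exprD -qq_addn1 qq_addn1_sub1. Qed.

Lemma u_exp_q : u ^+ q = u * U.
Proof. by rewrite -exprS qq_sub1S. Qed.

Lemma U_exp_r : U ^+ r = (u ^+ 2)^-1.
Proof.
have exp_2q : u ^+ (r * r) = (u * U) ^+ 2 by rewrite sq2q_sq mulnC exprM u_exp_q.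
have : u ^+ (r * r) = (u ^+ 2 * U) ^+ 2 * U ^+ r.
  by rewrite exprM u_exp_r exprMn [u ^+ 2 ^+ r]exprAC u_exp_r.
rewrite exp_2q => /(canLR (mulKf _)) <- //; last by rewrite expf_neq0 ?mulf_neq0 ?expf_neq0.
by field; rewrite u_neq0 U_neq0.
Qed.

Lemma U_exp_q : U ^+ q = (u ^+ 2 * U)^-1.
Proof.
have -> : U ^+ q = (U ^+ r) ^+ a by rewrite -[(U ^+ r) ^+ a]exprM sq2q_sqq2.
by rewrite U_exp_r exprVn -exprM -sq2q_double u_exp_r.
Qed.

Let U_neq1 : U != 1.
Proof.
apply: contra_neq u_neq1 => U1; apply: (expr2n_eq1_pchar2 F_char2 (e := 1)).
by rewrite -[LHS]invrK -U_exp_r U1 expr1n invr1.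
Qed.

Local Notation A := (u + 1).
Local Notation B := (u * U + 1).
Local Notation C := (U + 1).
Local Notation D := (u ^+ 2 * U + 1).

Let A_neq0 : A != 0. Proof. by rewrite (addr1_eq0_pchar2 F_char2) u_neq1. Qed.

Let B_neq0 : B != 0.
Proof.
by rewrite (addr1_eq0_pchar2 F_char2) -u_exp_q; apply: contra_neq u_neq1 => /(expr2n_eq1_pchar2 F_char2).
Qed.

Let C_neq0 : C != 0. Proof. by rewrite (addr1_eq0_pchar2 F_char2) U_neq1. Qed.

Let D_neq0 : D != 0.
Proof.
by rewrite (addr1_eq0_pchar2 F_char2) -u_exp_r; apply: contra_neq u_neq1 => /(expr2n_eq1_pchar2 F_char2).
Qed.

Let A2_neq0 : u ^+ 2 + 1 != 0.
Proof. by rewrite -[1](expr1n _ 2) -(sqrD_pchar2 F_char2) expf_neq0. Qed.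

(* [ring] ignores the characteristic: each identity is reduced to a ring identity by adding the
   vanishing correction term [c + c]. *)
Let AD_eq : A + D = u * B. Proof. by apply: (eq_addrr_pchar2 F_char2 (c := 1)); ring. Qed.
Let AuB_eq : A + u * B = D. Proof. by apply: (eq_addrr_pchar2 F_char2 (c := u)); ring. Qed.
Let AB_eq : A + B = u * C. Proof. by apply: (eq_addrr_pchar2 F_char2 (c := 1)); ring. Qed.
Let UAB_eq : U * A ^+ 2 + B ^+ 2 = D * C.
Proof. by apply: (eq_addrr_pchar2 F_char2 (c := 2%:R * u * U)); ring. Qed.

Lemma Groot_exp_r : w ^+ r = u ^+ 2 * B ^+ 2 / A ^+ 2.
Proof.
rewrite /Groot expr_div_n !(exprD_pchar2 F_char2) !expr1n exprMn [u ^+ 2 ^+ r]exprAC u_exp_r U_exp_r.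
by rewrite !(sqrD_pchar2 F_char2); field; rewrite A2_neq0 u_neq0.
Qed.

Lemma Groot_exp_q : w ^+ q = u ^+ 2 * U * C / D.
Proof.
rewrite /Groot expr_div_n !(exprD_pchar2 F_char2) !expr1n exprMn [u ^+ 2 ^+ q]exprAC u_exp_q U_exp_q.
by field; rewrite D_neq0 U_neq0 u_neq0.
Qed.

Lemma ratio_exp_r : (B / A) ^+ r = C / D.
Proof.
rewrite expr_div_n !(exprD_pchar2 F_char2) !expr1n exprMn u_exp_r U_exp_r.
by field; rewrite u_neq0 D_neq0.
Qed.

Lemma Groot_exp_qS : w ^+ q * w = u ^+ r.
Proof. by rewrite Groot_exp_q u_exp_r /Groot; field; rewrite D_neq0 C_neq0. Qed.

Lemma onerD_Groot_exp_r : 1 + w ^+ r = D ^+ 2 / A ^+ 2.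
Proof.
rewrite Groot_exp_r -AuB_eq [(_ + u * B) ^+ 2](sqrD_pchar2 F_char2).
by field; rewrite A_neq0.
Qed.

Lemma Groot_exp_r_sub2 : w ^+ (r - 2) * (1 + w ^+ r) = (B / A) ^+ 2 + ((B / A) ^+ 2) ^+ 2.
Proof.
have w_neq0 : w != 0 by rewrite mulf_neq0 ?invr_eq0.
have -> : w ^+ (r - 2) = w ^+ r / w ^+ 2.
  by rewrite -[in w ^+ r](subnK sq2q_ge2) exprD mulfK ?expf_neq0.
have -> (x : F) : x ^+ 2 + (x ^+ 2) ^+ 2 = (x * (1 + x)) ^+ 2.
  by rewrite [in RHS]exprMn (sqrD_pchar2 F_char2) expr1n; ring.
have -> : 1 + B / A = u * C / A by rewrite -AB_eq; field.
rewrite onerD_Groot_exp_r Groot_exp_r /Groot.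
by field; rewrite A_neq0 C_neq0 D_neq0.
Qed.

Lemma Groot_exp_q_sub_r : w ^+ (q - r) = U * C * A ^+ 2 / (D * B ^+ 2).
Proof.
have : w ^+ (q - r) * w ^+ r = w ^+ q by rewrite -exprD subnK ?sq2q_le_qq.
rewrite Groot_exp_q Groot_exp_r => /(canRL (mulfK _)) -> //.
  by field; rewrite A_neq0 B_neq0 D_neq0 u_neq0.
by rewrite !mulf_neq0 ?invr_eq0 ?expf_neq0.
Qed.

Lemma root_Groot : root (Gpoly F m) w.
Proof.
(* Multiplying by [1 + w^r] sums both the geometric and the telescoping part of [G(w)]. *)
have Y1_neq0 : 1 + w ^+ r != 0.
  by rewrite onerD_Groot_exp_r mulf_neq0 ?invr_eq0 ?expf_neq0.
have geo : (1 + w ^+ r) * \sum_(i < a.-1) w ^+ (i * r) = 1 + w ^+ (q - r).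
  rewrite (eq_bigr (fun i : 'I_a.-1 => (w ^+ r) ^+ i)) => [|i _]; last by rewrite mulnC exprM.
  by rewrite (geometric_sum_pchar2 F_char2) -exprM sq2q_mul_pred.
have tele : (1 + w ^+ r) *
    \sum_(j < k) w ^+ (2 ^ j * (r - 2)) * (1 + w ^+ r) ^+ (2 ^ j - 1) = (B / A) ^+ 2 + C / D.
  rewrite mulr_sumr (eq_bigr (fun j : 'I_k => ((B / A) ^+ 2 + ((B / A) ^+ 2) ^+ 2) ^+ (2 ^ j))).
    rewrite (telescope_exp2_pchar2 F_char2) -exprM -expnS.
    by rewrite expnS (_ : 2 ^ k = a)%N // -sq2q_double ratio_exp_r.
  move=> j _; rewrite -Groot_exp_r_sub2 [in RHS]exprMn -[in RHS]exprM [((r - 2) * _)%N]mulnC.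
  by rewrite mulrCA -exprS subn1 prednK ?expn_gt0.
apply/eqP/(mulfI Y1_neq0); rewrite mulr0 horner_Gpoly !mulrDr.
have -> : w ^+ s = w ^+ (q - r) * w by rewrite -exprSr ss_subS.
rewrite ![(1 + w ^+ r) * (w * _)]mulrCA geo tele onerD_Groot_exp_r Groot_exp_q_sub_r /Groot.
have key : (A ^+ 2 + D ^+ 2) * C * (U * A ^+ 2 + B ^+ 2) + D * B ^+ 2 * (A ^+ 2 + B ^+ 2) = 0.
  rewrite -!(sqrD_pchar2 F_char2) AD_eq AB_eq UAB_eq.
  rewrite [X in _ + X](_ : _ = (u * B) ^+ 2 * C * (D * C)) ?(addrr_pchar2 F_char2) //.
  by ring.
transitivity (((A ^+ 2 + D ^+ 2) * C * (U * A ^+ 2 + B ^+ 2) + D * B ^+ 2 * (A ^+ 2 + B ^+ 2))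
              / (A ^+ 2 * B ^+ 2 * C)); last by rewrite key mul0r.
by field; rewrite A_neq0 B_neq0 C_neq0 D_neq0.
Qed.

Lemma T1_param_Groot : T1_param m u = w ^+ 2 / u.
Proof.
have b_eq : U + U^-1 = C ^+ 2 / U.
  by rewrite (sqrD_pchar2 F_char2); field.
have b_exp_q : (U + U^-1) ^+ q = D ^+ 2 / (u ^+ 2 * U).
  rewrite (exprD_pchar2 F_char2) exprVn U_exp_q invrK (sqrD_pchar2 F_char2).
  by field; rewrite u_neq0 U_neq0.
have b_neq0 : U + U^-1 != 0 by rewrite b_eq mulf_neq0 ?invr_eq0 ?expf_neq0.
rewrite /T1_param -[X in X * u](mulfK b_neq0) -exprSr qq_sub1S.
by rewrite b_exp_q b_eq /Groot; field; rewrite u_neq0 U_neq0 C_neq0.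
Qed.

Lemma T1_param_exp_t : T1_param m u ^+ t = (w ^+ r) ^+ 2.
Proof.
have w_exp_t : w ^+ t = u ^+ r * w ^+ r.
  by rewrite /tt addnAC exprD addn1 exprSr Groot_exp_qS.
have u_exp_t : u ^+ t = u ^+ r * u ^+ r.
  by rewrite /tt addnAC exprD qq_addn1 exprD u_s mul1r.
rewrite T1_param_Groot expr_div_n [w ^+ 2 ^+ t]exprAC w_exp_t u_exp_t.
by field; rewrite expf_neq0.
Qed.

Lemma root_T1_param_exp_t : root (Gpoly F m) (T1_param m u ^+ t).
Proof. by rewrite T1_param_exp_t (root_Gpoly_exp2n 1) ?root_Gpoly_exp2n ?root_Groot. Qed.

Lemma T1_param_neq0 : T1_param m u != 0.
Proof. by rewrite T1_param_Groot !mulf_neq0 ?invr_eq0 ?expf_neq0. Qed.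

Lemma T1_param_exp_t_neq1 : T1_param m u ^+ t != 1.
Proof.
rewrite T1_param_exp_t; apply: contra_neq u_neq1 => /(expr2n_eq1_pchar2 F_char2 (e := 1)).
move=> /(expr2n_eq1_pchar2 F_char2) w1; apply: (expr2n_eq1_pchar2 F_char2 (e := (m.+1 %/ 2)%N)).
by rewrite -[LHS]Groot_exp_qS w1 expr1n mulr1.
Qed.

End RootOfG.

Lemma T1_param_exp_t_inj (u1 u2 : F) :
  u1 ^+ s = 1 -> u1 != 1 -> u2 ^+ s = 1 -> u2 != 1 ->
  T1_param m u1 ^+ t = T1_param m u2 ^+ t -> u1 = u2.
Proof.
move=> u1_s u1_neq1 u2_s u2_neq1; rewrite !T1_param_exp_t //.
move=> /(expr2n_inj_pchar2 F_char2 (e := 1)) /(expr2n_inj_pchar2 F_char2) Groot_eq.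
apply: (expr2n_inj_pchar2 F_char2 (e := (m.+1 %/ 2)%N)); rewrite /=.
by rewrite -Groot_exp_qS // Groot_eq Groot_exp_qS.
Qed.

End Char2.

Section FiniteField.
Variable E : finFieldType.
Hypotheses (E_char2 : 2 \in [pchar E]) (ss_dvd_card : (s %| #|E|.-1)%N).

Lemma root_GpolyP (y : E) : root (Gpoly E m) y ->
  y = 1 \/ exists2 u : E, u ^+ s = 1 /\ u != 1 & y = T1_param m u ^+ t.
Proof.
move=> y_root; have [g g_prim] := prim_root_dvd_card ss_dvd_card.
have s_pred : s.-1.+1 = s by rewrite prednK ?ss_gt0.
pose us := [seq g ^+ i | i <- iota 1 s.-1].
have us_roots u : u \in us -> u ^+ s = 1 /\ u != 1.
  case/mapP => i; rewrite mem_iota add1n s_pred => /andP[i_gt0 i_lt_s] ->; split.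
    by rewrite exprAC (prim_expr_order g_prim) expr1n.
  by rewrite -(expr0 g) (eq_prim_root_expr g_prim) mod0n modn_small // -lt0n.
have us_uniq : uniq us.
  rewrite map_inj_in_uniq ?iota_uniq // => i j; rewrite !mem_iota add1n s_pred.
  move=> /andP[_ i_lt_s] /andP[_ j_lt_s] /eqP.
  by rewrite (eq_prim_root_expr g_prim) !modn_small // => /eqP.
have : y \in 1 :: [seq T1_param m u ^+ t | u <- us].
  apply: mem_roots_of_size y_root; rewrite ?size_Gpoly /= ?size_map ?size_iota ?s_pred //.
  - by rewrite -size_poly_eq0 size_Gpoly.
  - rewrite (root_Gpoly1 E_char2); apply/allP => _ /mapP[u /us_roots[u_s u_neq1] ->].
    exact: root_T1_param_exp_t.
  - rewrite map_inj_in_uniq ?us_uniq ?andbT.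
      apply/mapP => -[u /us_roots[u_s u_neq1] /esym/eqP].
      exact/negP/(T1_param_exp_t_neq1 E_char2 u_s u_neq1).
    move=> u1 u2 /us_roots[u1_s u1_neq1] /us_roots[u2_s u2_neq1].
    exact: T1_param_exp_t_inj.
rewrite inE => /orP[/eqP -> | /mapP[u u_in ->]]; first by left.
by right; exists u => //; apply: us_roots.
Qed.

End FiniteField.
End OddExponent.

Theorem theorem4p6 (m : nat) (E : finFieldType) :
  odd m -> (3 <= m)%N -> #|E| = (qq m ^ 4)%N ->
  forall x : E, Q1 m x = 0 <-> T1 m x.
Proof.
move=> m_odd m_ge3 card_E x.
have E_char2 : 2 \in [pchar E].
  by apply: (@card_finPcharP _ _ (4 * m)) => //; rewrite card_E /qq -expnM mulnC.
have s_dvd : (ss m %| #|E|.-1)%N by rewrite card_E -subn1 ss_dvd.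
rewrite (Q1_Gpoly m_odd m_ge3); split => [/eqP x_root | [x_t | [u [v [u_s u_neq1 v_t ->]]]]].
- have [x_t | [u [u_s u_neq1] x_t_eq]] := root_GpolyP m_odd m_ge3 E_char2 s_dvd x_root.
    by left.
  have T1_neq0 := T1_param_neq0 m_odd m_ge3 E_char2 u_s u_neq1.
  right; exists u, (x / T1_param m u); split => //.
    by rewrite expr_div_n x_t_eq divff // expf_neq0.
  by rewrite [_ * u]/(T1_param m u) mulrC divfK.
- by apply/eqP; rewrite x_t; apply: root_Gpoly1.
- by apply/eqP; rewrite exprMn v_t mulr1; apply: root_T1_param_exp_t.
Qed.
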